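(* Let $\textsc{Om}_z$ be the fitness function with unknown target $z\in\{0,1\}^n$ and let $x$ be the current search point. Let $B$ be a set of $b$ known bit positions of which at least $b_0=\beta b$ positions $i$ are non-optimal (i.e., $x_i\neq z_i$), for some $\beta>0$, with the positions of the non-optimal bits distributed uniformly at random in $B$. Let $C,C'$ be sets of bit positions with $|C|=|C'|\le b_0/2$ such that $B,C,C'$ are pairwise disjoint. Then there is a $(1+1)$ elitist black-box strategy that copies the bits of $x$ in $C$ into the positions $C'$ (in a fixed order-preserving correspondence). For any $c>0$ this strategy requires at most $c\cdot|C|\cdot\log(n)/\beta$ iterations with probability $1-n^{-\Omega(c)}$. After the copy operation, at least $b_0-|C|$ bits in $B$ are non-optimal, and their positions are uniformly at random in $B$. The same strategy can be used to overwrite $C'$ with a fixed string (e.g., $(1,\ldots,1)$).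
   Context: For $z\in\{0,1\}^n$, $\textsc{Om}_z(x)=n-\sum_{i=1}^n(x_i\oplus z_i)$. A bit $x_i$ is optimal if $x_i=z_i$, non-optimal otherwise. A $(1+1)$ elitist black-box algorithm stores a single search point $x$; in each iteration it samples an offspring $y$ from a distribution depending only on $x$ (and, for a strategy, on known positions such as $B,C,C'$), learns only whether $f(y)$ is smaller, equal or larger than $f(x)$, and must keep a point of highest fitness among $x,y$ (ties broken arbitrarily). *)

From HB Require Import structures.
From mathcomp Require Import all_boot all_order all_algebra.
From mathcomp Require Import reals sequences exp.
Set Implicit Arguments. Unset Strict Implicit. Unset Printing Implicit Defensive.
Import Order.TTheory GRing.Theory Num.Theory.
Local Open Scope ring_scope.

Definition bs (n : nat) := {ffun 'I_n -> bool}.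

Definition OM n (z x : bs n) : nat := (n - \sum_(i < n) (x i (+) z i : nat))%N.

Definition nonopt n (z x : bs n) : {set 'I_n} := [set i | x i != z i].

(* A (1+1) elitist black-box strategy (for fixed, known n, B, C, C'):
   - offs x : distribution of the offspring, depending only on x;
   - tie x y : whether y replaces x when f(y) = f(x) (ties broken arbitrarily);
   - stop x : the strategy's (observable) termination test on the current point. *)
Record strategy (R : realType) (n : nat) := Strategy {
  offs : bs n -> {ffun bs n -> R};
  offs_ge0 : forall x y, 0 <= offs x y;
  offs_sum1 : forall x, \sum_y offs x y = 1;
  tie : bs n -> bs n -> bool;
  stop : bs n -> bool }.

Definition select n (t : bs n -> bs n -> bool) (z x y : bs n) : bs n :=
  if (OM z x < OM z y)%N then y
  else if OM z y == OM z x then (if t x y then y else x) else x.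

Definition kern (R : realType) n (S : strategy R n) (z x x' : bs n) : R :=
  if stop S x then (x' == x)%:R
  else \sum_y offs S x y * (select (tie S) z x y == x')%:R.

(* law S z t x0 x' = Pr[ stopped chain started at x0 is at x' after t iterations ] *)
Fixpoint law (R : realType) n (S : strategy R n) (z : bs n) (t : nat) (x0 x' : bs n) : R :=
  match t with
  | 0 => (x' == x0)%:R
  | t'.+1 => \sum_x law S z t' x0 x * kern S z x x'
  end.

(* the m-subsets of B (possible sets of non-optimal positions in B) *)
Definition nsub n (B : {set 'I_n}) (m : nat) : {set {set 'I_n}} :=
  [set N : {set 'I_n} | (N \subset B) && (#|N| == m)].

(* the target determined by x0, the set N of non-optimal positions in B,
   and the (arbitrary, fixed) target bits zout outside B *)
Definition targ n (B N : {set 'I_n}) (x0 zout : bs n) : bs n :=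
  [ffun i => if i \in B then (if i \in N then ~~ x0 i else x0 i) else zout i].

(* Pr[ tau <= t and P N (x_tau) ], where N is uniform among the m-subsets of B
   and tau is the first time at which stop holds *)
Definition prob_stop (R : realType) n (S : strategy R n) (B : {set 'I_n}) (m : nat)
    (x0 zout : bs n) (t : nat) (P : {set 'I_n} -> bs n -> bool) : R :=
  (#|nsub B m|%:R)^-1 *
  \sum_(N in nsub B m) \sum_(x | stop S x && P N x) law S (targ B N x0 zout) t x0 x.

(* x carries in C' the bits of x0 in C, via the order-preserving bijection C -> C' *)
Definition copied n (C C' : {set 'I_n}) (x0 x : bs n) : Prop :=
  forall i j, i \in C -> j \in C' -> index i (enum C) = index j (enum C') -> x j = x0 i.

(* the goal on C': [None] = copy the bits of x0 in C into C';
   [Some w] = overwrite C' with the fixed string w (restricted to C') *)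
Definition goal_ok n (w : option (bs n)) (C C' : {set 'I_n}) (x0 x : bs n) : Prop :=
  match w with
  | None => copied C C' x0 x
  | Some w => forall j, j \in C' -> x j = w j
  end.

From HB Require Import structures.
From mathcomp Require Import all_boot all_order all_algebra perm.
From mathcomp Require Import reals sequences exp.
From mathcomp Require Import zify ring lra.
Set Implicit Arguments. Unset Strict Implicit. Unset Printing Implicit Defensive.
Import Order.TTheory GRing.Theory Num.Theory.
Local Open Scope ring_scope.

(* The strategy flips a uniformly random position i of B together with the
   first position j of C' that still differs from its goal bit, and accepts
   ties.  If x_i is non-optimal, flipping it gains one in fitness and flipping
   j loses at most one, so the offspring is accepted and j is fixed at the cost
   of at most one non-optimal bit of B.  Hence at least b0 - |C| >= beta |B| / 2
   bits of B stay non-optimal, and the potential 2^(#pending positions) drops by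
   the factor 1 - beta/4 in expectation at every step, which gives the tail
   bound.  The strategy never looks inside B, so the chain commutes with every
   permutation of B acting on the offsets from x0; since the non-optimal set
   of the target is uniform, so is the non-optimal set at the stopping time. *)

Section StoppedChain.
Variables (R : realType) (n : nat) (S : strategy R n) (z : bs n).
Implicit Types (x y : bs n) (f : bs n -> R).

Definition kern_mean x f : R := \sum_x' kern S z x x' * f x'.

Lemma kern_ge0 x (x' : bs n) : 0 <= kern S z x x'.
Proof.
rewrite /kern; case: ifP => _; first by rewrite ler0n.
by apply: sumr_ge0 => y _; rewrite mulr_ge0 ?ler0n ?offs_ge0.
Qed.

Lemma kern_meanE x f : kern_mean x f =
  if stop S x then f x else \sum_y offs S x y * f (select (tie S) z x y).
Proof.
rewrite /kern_mean /kern; case: ifP => _.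
  rewrite (bigD1 x) //= eqxx mul1r big1 ?addr0 // => y /negbTE ->.
  by rewrite mul0r.
under eq_bigr do rewrite big_distrl /=.
rewrite exchange_big /=; apply: eq_bigr => y _.
rewrite (bigD1 (select (tie S) z x y)) //= eqxx mulr1 big1 ?addr0 // => x'.
by rewrite eq_sym => /negbTE ->; rewrite mulr0 mul0r.
Qed.

Lemma law_ge0 t (x0 : bs n) x : 0 <= law S z t x0 x.
Proof.
elim: t x => [|t IH] x /=; first by rewrite ler0n.
by apply: sumr_ge0 => y _; rewrite mulr_ge0 ?IH ?kern_ge0.
Qed.

Lemma sum_law0 (x0 : bs n) f : \sum_x law S z 0 x0 x * f x = f x0.
Proof.
rewrite /= (bigD1 x0) //= eqxx mul1r big1 ?addr0 // => y /negbTE ->.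
by rewrite mul0r.
Qed.

Lemma sum_lawS t (x0 : bs n) f :
  \sum_x law S z t.+1 x0 x * f x = \sum_x law S z t x0 x * kern_mean x f.
Proof.
under eq_bigr do rewrite big_distrl /=.
rewrite exchange_big /=; apply: eq_bigr => x _.
by rewrite /kern_mean big_distrr /=; apply: eq_bigr => x' _; rewrite mulrA.
Qed.

Lemma law_sum1 t (x0 : bs n) : \sum_x law S z t x0 x = 1.
Proof.
have mean1 x : kern_mean x (fun=> 1) = 1.
  rewrite kern_meanE; case: ifP => // _.
  by under eq_bigr do rewrite mulr1; exact: offs_sum1.
elim: t => [|t IH]; first by have := sum_law0 x0 (fun=> 1); under eq_bigr do rewrite mulr1.
have := sum_lawS t x0 (fun=> 1); under eq_bigr do rewrite mulr1.
by move=> ->; under eq_bigr do rewrite mean1 mulr1.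
Qed.

Lemma law_gt0_inv (P : bs n -> Prop) (x0 : bs n) :
  P x0 -> (forall x (x' : bs n), P x -> 0 < kern S z x x' -> P x') ->
  forall t x, 0 < law S z t x0 x -> P x.
Proof.
move=> P0 Pstep; elim=> [|t IH] x /=.
  by case: eqP => [-> //|]; rewrite ltxx.
move=> /gt_eqF/negbT/eqP/psumr_neq0P [y|y /andP[_]].
  by rewrite mulr_ge0 ?law_ge0 ?kern_ge0.
rewrite lt0r mulf_eq0 negb_or => /andP[/andP[law0 kern0] _].
apply: (Pstep y); last by rewrite lt0r kern0 kern_ge0.
by apply: IH; rewrite lt0r law0 law_ge0.
Qed.

Lemma law_drift f (q : R) (x0 : bs n) :
  0 <= q -> (forall t x, 0 < law S z t x0 x -> kern_mean x f <= q * f x) ->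
  forall t, \sum_x law S z t x0 x * f x <= q ^+ t * f x0.
Proof.
move=> q0 drift; elim=> [|t IH]; first by rewrite sum_law0 expr0 mul1r.
rewrite sum_lawS exprS -mulrA.
apply: le_trans (_ : \sum_x law S z t x0 x * (q * f x) <= _).
  apply: ler_sum => x _; have := law_ge0 t x0 x.
  rewrite le_eqVlt => /predU1P[<-|lawx]; first by rewrite !mul0r.
  apply: ler_wpM2l; [exact: ltW lawx | exact: drift lawx].
rewrite (eq_bigr (fun x => q * (law S z t x0 x * f x))) => [|x _]; last exact: mulrCA.
by rewrite -big_distrr ler_wpM2l.
Qed.

Lemma law_stop_ge f t (x0 : bs n) :
  (forall x, 0 <= f x) -> (forall x, ~~ stop S x -> 1 <= f x) ->
  1 - \sum_x law S z t x0 x * f x <= \sum_(x | stop S x) law S z t x0 x.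
Proof.
move=> f0 f1; have nonstop_le : \sum_(x | ~~ stop S x) law S z t x0 x <=
    \sum_x law S z t x0 x * f x.
  apply: le_trans (_ : \sum_(x | ~~ stop S x) law S z t x0 x * f x <= _).
    by apply: ler_sum => x /f1 fx1; rewrite ler_peMr ?law_ge0.
  rewrite [X in _ <= X](bigID (fun x => ~~ stop S x)) /= lerDl.
  by apply: sumr_ge0 => x _; rewrite mulr_ge0 ?law_ge0.
have := law_sum1 t x0; rewrite (bigID (stop S)) /= => sum1; lra.
Qed.

Lemma law_equivariant (h : bs n -> bs n) (x0 : bs n) :
  injective h -> h x0 = x0 ->
  (forall x x', kern S (h z) (h x) (h x') = kern S z x x') ->
  forall t x, law S (h z) t x0 (h x) = law S z t x0 x.
Proof.
move=> h_inj hx0 hkern; elim=> [|t IH] x /=; first by rewrite -{1}hx0 (inj_eq h_inj).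
by rewrite (reindex_inj h_inj); apply: eq_bigr => y _; rewrite IH hkern.
Qed.

End StoppedChain.

Lemma nsub_gt0 n (B : {set 'I_n}) m : (m <= #|B|)%N -> (0 < #|nsub B m|)%N.
Proof.
move=> mB; apply/card_gt0P; exists [set k in take m (enum B)].
rewrite inE; apply/andP; split.
  by apply/subsetP => k; rewrite inE => /mem_take; rewrite mem_enum.
have uniq_take : uniq (take m (enum B)) by rewrite take_uniq ?enum_uniq.
by rewrite cardsE (card_uniqP uniq_take) size_takel // -cardE.
Qed.

Lemma nonopt_targ n (B N : {set 'I_n}) (x0 zout : bs n) :
  N \subset B -> B :&: nonopt (targ B N x0 zout) x0 = N.
Proof.
move=> NB; apply/setP => k; rewrite !inE ffunE.
case kB: (k \in B) => /=; first by case: (k \in N); case: (x0 k).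
by apply/esym/negbTE; apply: contraFN kB; apply: (subsetP NB).
Qed.

Lemma prob_stop_ge (R : realType) n (S : strategy R n) (B : {set 'I_n}) m
    (x0 zout : bs n) t (P : {set 'I_n} -> bs n -> bool) (eps : R) :
  (m <= #|B|)%N ->
  (forall N, N \in nsub B m ->
     eps <= \sum_(x | stop S x && P N x) law S (targ B N x0 zout) t x0 x) ->
  eps <= prob_stop S B m x0 zout t P.
Proof.
move=> mB epsN; have nsub0 : 0 < (#|nsub B m|%:R : R) by rewrite ltr0n nsub_gt0.
rewrite /prob_stop ler_pdivlMl // mulr_natl.
rewrite -sumr_const; exact: ler_sum.
Qed.

Definition relabel n (s : {perm 'I_n}) (x0 x : bs n) : bs n :=
  [ffun k => x (s k) (+) (x0 (s k) (+) x0 k)].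

Lemma relabelK n (s : {perm 'I_n}) (x0 : bs n) :
  cancel (relabel s x0) (relabel s^-1%g x0).
Proof.
move=> x; apply/ffunP => k; rewrite !ffunE permKV.
by case: (x k); case: (x0 k); case: (x0 (s^-1%g k)).
Qed.

Lemma relabel_inj n (s : {perm 'I_n}) (x0 : bs n) : injective (relabel s x0).
Proof. exact: can_inj (relabelK s x0). Qed.

Lemma relabel_id n (s : {perm 'I_n}) (x0 : bs n) : relabel s x0 x0 = x0.
Proof. by apply/ffunP => k; rewrite !ffunE; case: (x0 k); case: (x0 (s k)). Qed.

Lemma OM_relabel n (s : {perm 'I_n}) (x0 z x : bs n) :
  OM (relabel s x0 z) (relabel s x0 x) = OM z x.
Proof.
rewrite /OM; congr (n - _)%N; rewrite [RHS](reindex_inj (@perm_inj _ s)).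
apply: eq_bigr => k _; rewrite !ffunE.
by case: (x (s k)); case: (z (s k)); case: (x0 (s k)); case: (x0 k).
Qed.

Lemma preimset_permK (T : finType) (s : {perm T}) (A : {set T}) :
  s^-1%g @^-1: (s @^-1: A) = A.
Proof. by apply/setP => k; rewrite !inE permKV. Qed.

Definition relabel_invariant (R : realType) n (S : strategy R n) (x0 : bs n)
    (s : {perm 'I_n}) : Prop :=
  (forall x, stop S (relabel s x0 x) = stop S x) /\
  (forall z x x', kern S (relabel s x0 z) (relabel s x0 x) (relabel s x0 x') = kern S z x x').

Section RelabelInB.
Variables (n : nat) (B : {set 'I_n}) (s : {perm 'I_n}) (x0 : bs n).
Hypothesis s_out : forall k, k \notin B -> s k = k.

Lemma perm_memB k : (s k \in B) = (k \in B).
Proof.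
have [kB|kB] := boolP (k \in B); last by rewrite s_out // (negbTE kB).
apply/idPn => skB.
by have /perm_inj sk := s_out skB; rewrite sk kB in skB.
Qed.

Lemma relabel_out (x : bs n) k : k \notin B -> relabel s x0 x k = x k.
Proof. by move=> kB; rewrite ffunE s_out // addbb addbF. Qed.

Lemma relabel_targ (N : {set 'I_n}) (zout : bs n) :
  relabel s x0 (targ B N x0 zout) = targ B (s @^-1: N) x0 zout.
Proof.
apply/ffunP => k; rewrite !ffunE perm_memB inE.
case: ifP => kB; last by rewrite s_out ?kB // addbb addbF.
by case: (s k \in N); case: (x0 (s k)); case: (x0 k).
Qed.

Lemma nonopt_relabel (z x : bs n) :
  B :&: nonopt (relabel s x0 z) (relabel s x0 x) = s @^-1: (B :&: nonopt z x).
Proof.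
apply/setP => k; rewrite !inE perm_memB !ffunE; congr (_ && _).
by case: (x (s k)); case: (z (s k)); case: (x0 (s k)); case: (x0 k).
Qed.

Lemma nsub_preimset m (N : {set 'I_n}) : (s @^-1: N \in nsub B m) = (N \in nsub B m).
Proof.
rewrite !inE card_preimset //; last exact: perm_inj.
congr (_ && _); apply/subsetP/subsetP => NB k.
  by move=> kN; rewrite -(permKV s k) perm_memB; apply: NB; rewrite inE permKV.
by rewrite inE => /NB; rewrite perm_memB.
Qed.

Lemma prob_stop_relabel (R : realType) (S : strategy R n) m zout t (S0 : {set 'I_n}) :
  relabel_invariant S x0 s ->
  prob_stop S B m x0 zout t (fun N x => B :&: nonopt (targ B N x0 zout) x == s @^-1: S0) =
  prob_stop S B m x0 zout t (fun N x => B :&: nonopt (targ B N x0 zout) x == S0).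
Proof.
move=> [stop_relabel kern_relabel]; rewrite /prob_stop; congr (_ * _).
have preimset_inj : injective (fun N : {set 'I_n} => s @^-1: N).
  by move=> N1 N2 eqN; rewrite -(preimset_permK s N1) eqN preimset_permK.
rewrite [LHS](reindex_inj preimset_inj); apply: eq_big => [N|N _].
  by rewrite nsub_preimset.
rewrite [LHS](reindex_inj (@relabel_inj n s x0)) -relabel_targ.
apply: eq_big => [x|x _]; last first.
  by rewrite (law_equivariant (@relabel_inj n s x0) (relabel_id s x0)).
by rewrite stop_relabel nonopt_relabel (inj_eq preimset_inj).
Qed.

End RelabelInB.

Lemma prob_stop_uniform (R : realType) n (S : strategy R n) (B : {set 'I_n}) m
    (x0 zout : bs n) t (S1 S2 : {set 'I_n}) :
  (forall s : {perm 'I_n}, (forall k, k \notin B -> s k = k) ->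
     relabel_invariant S x0 s) ->
  S1 \subset B -> S2 \subset B -> #|S1| = #|S2| ->
  prob_stop S B m x0 zout t (fun N x => B :&: nonopt (targ B N x0 zout) x == S1) =
  prob_stop S B m x0 zout t (fun N x => B :&: nonopt (targ B N x0 zout) x == S2).
Proof.
move=> invariant; move Ed: #|S1 :\: S2| => d.
elim: d S1 Ed => [|d IH] S1 Ed S1B S2B card12.
  suff /eqP-> : S1 == S2 by [].
  by rewrite eqEcard card12 leqnn andbT -setD_eq0 -cards_eq0 Ed.
have [a] : exists a, a \in S1 :\: S2 by apply/card_gt0P; rewrite Ed.
have [b] : exists b, b \in S2 :\: S1.
  by apply/card_gt0P; rewrite cardsD setIC -card12 -cardsD Ed.
rewrite !inE => /andP[bS1 bS2] /andP[aS2 aS1].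
have aB : a \in B by apply: (subsetP S1B).
have bB : b \in B by apply: (subsetP S2B).
have ab_out k : k \notin B -> tperm a b k = k.
  by move=> kB; apply: tpermD; apply: contraNneq kB => <-.
rewrite -(prob_stop_relabel ab_out _ _ _ _ (invariant _ ab_out)); apply: IH => //.
- have -> : tperm a b @^-1: S1 :\: S2 = (S1 :\: S2) :\ a.
    apply/setP => y; rewrite !inE.
    case: (tpermP a b y) => [->|->|/eqP ya _]; last by rewrite ya.
      by rewrite eqxx (negbTE bS1) andbF.
    by rewrite bS2 !andbF.
  by move: Ed; rewrite (cardsD1 a) !inE aS1 aS2 => [[]].
- by apply/subsetP => y; rewrite inE -(perm_memB ab_out); apply: (subsetP S1B).
- by rewrite card_preimset //; exact: perm_inj.
Qed.

Lemma select_ties n (z x y : bs n) :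
  select (fun _ _ => true) z x y = if (OM z x <= OM z y)%N then y else x.
Proof. by rewrite /select; case: ltngtP. Qed.

Lemma geometric_decay_le (R : realType) (beta s : R) (k t : nat) :
  0 < beta <= 1 -> 10 <= s -> (0 < k)%N -> k%:R * s - beta <= beta * t%:R ->
  (1 - beta / 4) ^+ t * 2 ^+ k <= expR (- (s / 8)).
Proof.
move=> /andP[beta0 beta1] s10 k0 hkt.
have k1 : 1 <= (k%:R : R) by rewrite ler1n.
have decay : (1 - beta / 4) ^+ t <= expR (- (beta / 4) * t%:R).
  by rewrite expRM_natr lerXn2r ?nnegrE ?expR_ge1Dx ?expR_ge0 //; lra.
have pow2 : (2 : R) ^+ k <= expR k%:R.
  rewrite -[X in expR X]mulr1 expRM_natl lerXn2r ?nnegrE ?expR_ge0 //.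
  by have := expR_ge1Dx (1 : R); lra.
apply: le_trans (_ : expR (- (beta / 4) * t%:R) * expR k%:R <= _).
  by apply: ler_pM => //; apply: exprn_ge0; lra.
rewrite -expRD ler_expR.
have : 0 <= (k%:R - 1) * (s - 10) by apply: mulr_ge0; lra.
nra.
Qed.

Lemma disjoint_neq n (A1 A2 : {set 'I_n}) a b :
  [disjoint A1 & A2] -> a \in A1 -> b \in A2 -> a != b.
Proof. by move=> A12 aA1; apply: contraTneq => <-; rewrite (disjointFr A12 aA1). Qed.

Section CopyStrategy.
Variables (R : realType) (n : nat) (B C C' : {set 'I_n}) (w : option (bs n)).
Hypotheses (BC : [disjoint B & C]) (BC' : [disjoint B & C']) (CC' : [disjoint C & C']).
Hypothesis cardC : #|C| = #|C'|.
Implicit Types (x y z : bs n).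

Definition copy_src (j : 'I_n) : 'I_n := nth j (enum C) (index j (enum C')).

Definition goal_bit x (j : 'I_n) : bool := if w is Some v then v j else x (copy_src j).

Definition pending x : {set 'I_n} := [set j in C' | x j != goal_bit x j].

Definition copy_done x : bool := pending x == set0.

Definition next_pending x : option 'I_n := [pick j in pending x].

Definition copy_mutant x (i : 'I_n) : bs n :=
  [ffun k => x k (+) ((k == i) || (Some k == next_pending x))].

(* For B = set0 any distribution will do: the hypothesis |C| <= beta |B| / 2
   then forces C = set0, so the copy is done from the start. *)
Definition copy_offs x : {ffun bs n -> R} :=
  [ffun y => if #|B| == 0%N then (y == x)%:R
             else \sum_(i in B) #|B|%:R^-1 * (y == copy_mutant x i)%:R].

Lemma copy_offs_ge0 x y : 0 <= copy_offs x y.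
Proof.
rewrite ffunE; case: ifP => _; first by rewrite ler0n.
by apply: sumr_ge0 => i _; rewrite mulr_ge0 ?invr_ge0 ?ler0n.
Qed.

Lemma copy_offs_sum1 x : \sum_y copy_offs x y = 1.
Proof.
under eq_bigr do rewrite ffunE.
have [B0|B0] := eqVneq #|B| 0%N.
  by rewrite (bigD1 x) //= eqxx big1 ?addr0 // => y /negbTE ->.
rewrite exchange_big /=.
have mass i : \sum_y #|B|%:R^-1 * (y == copy_mutant x i)%:R = #|B|%:R^-1 :> R.
  rewrite -big_distrr /= (bigD1 (copy_mutant x i)) //= eqxx big1 ?addr0 ?mulr1 //.
  by move=> y /negbTE ->.
under eq_bigr do rewrite mass.
by rewrite sumr_const -[_ *+ _]mulr_natr mulVf // pnatr_eq0.
Qed.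

Definition copy_strategy : strategy R n :=
  Strategy copy_offs_ge0 copy_offs_sum1 (fun _ _ => true) copy_done.

Lemma copy_src_in j : j \in C' -> copy_src j \in C.
Proof.
move=> jC'; rewrite /copy_src -mem_enum mem_nth //.
by rewrite -cardE cardC cardE index_mem mem_enum.
Qed.

Lemma pending_sub x : pending x \subset C'.
Proof. by apply/subsetP => k; rewrite inE => /andP[]. Qed.

Lemma card_pending_le x : (#|pending x| <= #|C|)%N.
Proof. by rewrite cardC subset_leq_card ?pending_sub. Qed.

Lemma next_pending_in x j : next_pending x = Some j -> j \in pending x.
Proof. by rewrite /next_pending; case: pickP => // k kx [<-]. Qed.

Lemma next_pending_C' x j : next_pending x = Some j -> j \in C'.
Proof. by move/next_pending_in; apply: (subsetP (pending_sub x)). Qed.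

Lemma next_pendingP x : ~~ copy_done x -> exists j, next_pending x = Some j.
Proof.
rewrite /copy_done /next_pending => /set0Pn [j jx].
by case: pickP => [k _|/(_ j)]; [exists k | rewrite jx].
Qed.

Lemma copy_mutant_id x i k :
  k != i -> Some k != next_pending x -> copy_mutant x i k = x k.
Proof. by move=> ki kj; rewrite ffunE (negbTE ki) (negbTE kj) addbF. Qed.

Lemma copy_mutant_out x i k :
  i \in B -> k \notin B -> k \notin C' -> copy_mutant x i k = x k.
Proof.
move=> iB kB kC'; apply: copy_mutant_id; first by apply: contraNneq kB => ->.
case jx: (next_pending x) => [j|] //; apply: contraNneq kC' => -[->].
exact: next_pending_C' jx.
Qed.

Lemma goal_bit_mutant x i j k : i \in B -> next_pending x = Some j -> k \in C' ->
  goal_bit (copy_mutant x i) k = goal_bit x k.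
Proof.
move=> iB jx kC'; rewrite /goal_bit; case: w => [//|].
have srcC := copy_src_in kC'; apply: copy_mutant_id.
  by rewrite eq_sym (disjoint_neq BC iB srcC).
by rewrite jx (inj_eq Some_inj) (disjoint_neq CC' srcC (next_pending_C' jx)).
Qed.

Lemma pending_mutant x i j : i \in B -> next_pending x = Some j ->
  pending (copy_mutant x i) = pending x :\ j.
Proof.
move=> iB jx; have := next_pending_in jx; rewrite inE => /andP[_ xj].
apply/setP => k; rewrite !inE; case kC': (k \in C'); rewrite ?andbF //=.
have ki : (k == i) = false by rewrite eq_sym (negbTE (disjoint_neq BC' iB kC')).
rewrite (goal_bit_mutant iB jx) // ffunE jx ki (inj_eq Some_inj) /=.
by have [->|_] := eqVneq k j; [move: xj; case: (x j); case: goal_bit | rewrite addbF].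
Qed.

Lemma OM_mutant_ge z x i j : i \in B -> next_pending x = Some j -> x i != z i ->
  (OM z x <= OM z (copy_mutant x i))%N.
Proof.
move=> iB jx xzi; rewrite /OM leq_sub2l //.
have ji : j != i by rewrite eq_sym (disjoint_neq BC' iB (next_pending_C' jx)).
have split_ij (F : 'I_n -> nat) : (\sum_(k < n) F k =
    F i + F j + \sum_(k < n | (k != i) && (k != j)) F k)%N.
  by rewrite (bigD1 i) //= (bigD1 j ji) /= addnA.
rewrite (split_ij (fun k => copy_mutant x i k (+) z k : nat)) split_ij.
rewrite (eq_bigr (fun k => x k (+) z k : nat)) => [|k /andP[ki kj]]; last first.
  by rewrite copy_mutant_id // jx; apply: contraNneq kj => -[->].
rewrite !ffunE eqxx jx eqxx orbT /= leq_add2r.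
by move: xzi; case: (x i); case: (z i) => //= _; case: (x j); case: (z j).
Qed.

Lemma kern_copy_gt0 z x x' : 0 < kern copy_strategy z x x' ->
  x' = x \/ exists i j, [/\ i \in B, next_pending x = Some j & x' = copy_mutant x i].
Proof.
rewrite /kern /=; case: ifP => done_x.
  by case: eqP => [->|]; [left | rewrite ltxx].
move=> /gt_eqF/negbT/eqP/psumr_neq0P [y _|y /andP[_]].
  by rewrite mulr_ge0 ?copy_offs_ge0 ?ler0n.
have [/eqP<-|] := boolP (select _ z x y == x'); last by rewrite mulr0 ltxx.
rewrite mulr1 ffunE select_ties; case: eqP => _.
  by case: eqP => [->|]; [left; case: ifP | rewrite ltxx].
move=> /gt_eqF/negbT/eqP/psumr_neq0P [i iB|i /andP[iB]].
  by rewrite mulr_ge0 ?invr_ge0 ?ler0n.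
case: eqP => [->|]; last by rewrite mulr0 ltxx.
have [j jx] := next_pendingP (negbT done_x).
by case: ifP => _ _; [right; exists i, j | left].
Qed.

Definition copy_inv z x0 x : Prop :=
  (forall k, k \notin B -> k \notin C' -> x k = x0 k) /\
  (#|B :&: nonopt z x0| + #|pending x| <= #|B :&: nonopt z x| + #|pending x0|)%N.

Lemma copy_inv_step z x0 x x' :
  copy_inv z x0 x -> 0 < kern copy_strategy z x x' -> copy_inv z x0 x'.
Proof.
move=> [same_out count] /kern_copy_gt0 [->|[i [j [iB jx ->]]]] //.
split=> [k kB kC'|]; first by rewrite copy_mutant_out ?same_out.
have jx_pending := next_pending_in jx.
have lose_one : (#|B :&: nonopt z x| <= #|B :&: nonopt z (copy_mutant x i)| + 1)%N.
  rewrite (cardsD1 i (B :&: nonopt z x)) addnC leq_add ?leq_b1 //.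
  apply: subset_leq_card; apply/subsetP => k; rewrite !inE => /and3P[ki kB kx].
  rewrite kB copy_mutant_id // jx; apply: contraTneq kB => -[->].
  by rewrite (disjointFl BC' (next_pending_C' jx)).
move: count; rewrite (pending_mutant iB jx) (cardsD1 j (pending x)) jx_pending add1n.
rewrite addnS => count; rewrite -ltnS (leq_trans count) // -addSn leq_add2r -addn1.
exact: lose_one.
Qed.

Lemma law_copy_inv z t x0 x :
  0 < law copy_strategy z t x0 x -> copy_inv z x0 x.
Proof.
apply: law_gt0_inv; last exact: copy_inv_step.
by split=> //; rewrite addnC.
Qed.

Lemma copy_inv_nonopt z x0 x : copy_inv z x0 x ->
  (#|B :&: nonopt z x0| <= #|B :&: nonopt z x| + #|C|)%N.
Proof. by move=> [_ count]; have := card_pending_le x0; lia. Qed.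

(* Zero on stopped states, where the chain stays put, so that the drift bound
   holds there too. *)
Definition potential x : R := if copy_done x then 0 else 2 ^+ #|pending x|.

Lemma potential_ge0 x : 0 <= potential x.
Proof. by rewrite /potential; case: ifP => _ //; rewrite exprn_ge0. Qed.

Lemma potential_ge1 x : ~~ copy_done x -> 1 <= potential x.
Proof. by rewrite /potential => /negbTE->; rewrite exprn_ege1 // ler1n. Qed.

Lemma potential_le x : potential x <= 2 ^+ #|C|.
Proof.
rewrite /potential; case: ifP => _; first by rewrite exprn_ge0.
by rewrite ler_weXn2l ?ler1n ?card_pending_le.
Qed.

Lemma potential_select_le z x i : i \in B -> ~~ copy_done x ->
  potential (select (fun _ _ => true) z x (copy_mutant x i)) <=
  potential x - (i \in nonopt z x)%:R * (potential x / 2).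
Proof.
move=> iB undone; have [j jx] := next_pendingP undone.
rewrite select_ties; case: leqP => [_|reject]; last first.
  suff /negbTE-> : i \notin nonopt z x by rewrite mul0r subr0.
  by apply: contraTN reject; rewrite inE -leqNgt; apply: OM_mutant_ge iB jx.
apply: le_trans (_ : potential x / 2 <= _); last first.
  have := potential_ge0 x; case: (i \in nonopt z x); rewrite /= ?mul1r ?mul0r; lra.
rewrite /potential (negbTE undone); case: ifP => _; first by rewrite divr_ge0 ?exprn_ge0.
rewrite (pending_mutant iB jx) (cardsD1 j (pending x)) (next_pending_in jx) add1n.
by rewrite exprS mulrC mulKf ?pnatr_eq0.
Qed.

Lemma kern_mean_copy z x f : ~~ copy_done x -> #|B| != 0%N ->
  kern_mean copy_strategy z x f =
  \sum_(i in B) #|B|%:R^-1 * f (select (fun _ _ => true) z x (copy_mutant x i)).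
Proof.
move=> undone B0; rewrite kern_meanE /= (negbTE undone).
under eq_bigr do rewrite ffunE (negbTE B0) big_distrl /=.
rewrite exchange_big /=; apply: eq_bigr => i _.
rewrite (bigD1 (copy_mutant x i)) //= eqxx mulr1 big1 ?addr0 // => y /negbTE->.
by rewrite mulr0 mul0r.
Qed.

Lemma potential_drift z x0 x (beta : R) m :
  beta * #|B|%:R <= m%:R -> #|C|%:R <= beta * #|B|%:R / 2 ->
  (m <= #|B :&: nonopt z x0|)%N -> copy_inv z x0 x ->
  kern_mean copy_strategy z x potential <= (1 - beta / 4) * potential x.
Proof.
move=> betaB Chalf m_nonopt inv.
have [done_x|undone] := boolP (copy_done x).
  by rewrite kern_meanE /= done_x /potential done_x mulr0.
have [j jx] := next_pendingP undone.
have C0 : (0 < #|C|)%N.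
  by apply: leq_trans (card_pending_le x); apply/card_gt0P; exists j; apply: next_pending_in.
have B0 : #|B| != 0%N.
  by apply: contraTneq C0 => B0; rewrite -leqNgt -(ler_nat R); move: Chalf; rewrite B0 mulr0 mul0r.
set Bn : R := #|B|%:R; set P := potential x.
have Bn0 : 0 < Bn by rewrite ltr0n lt0n.
have many_nonopt : beta * Bn / 2 <= #|B :&: nonopt z x|%:R.
  by have := leq_trans m_nonopt (copy_inv_nonopt inv); rewrite -(ler_nat R) natrD; lra.
rewrite kern_mean_copy //.
apply: le_trans (_ : \sum_(i in B) Bn^-1 * (P - (i \in nonopt z x)%:R * (P / 2)) <= _).
  by apply: ler_sum => i iB; rewrite ler_wpM2l ?invr_ge0 ?ler0n ?potential_select_le.
have count_nonopt : \sum_(i in B) ((i \in nonopt z x)%:R : R) = #|B :&: nonopt z x|%:R.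
  rewrite (eq_bigr (fun i => if i \in nonopt z x then 1 else 0)) => [|i _]; last first.
    by case: (_ \in _).
  by rewrite -big_mkcondr /= sumr_const; congr _%:R; apply: eq_card => i; rewrite [RHS]inE.
rewrite -big_distrr /= sumrB sumr_const -big_distrl /= count_nonopt.
have -> : Bn^-1 * (P *+ #|B| - #|B :&: nonopt z x|%:R * (P / 2)) =
          P - #|B :&: nonopt z x|%:R / Bn * (P / 2).
  by rewrite -mulr_natr -/Bn; field; lra.
have ratio : beta / 2 <= #|B :&: nonopt z x|%:R / Bn by rewrite ler_pdivlMr //; lra.
have := ler_wpM2r (divr_ge0 (potential_ge0 x) (ler0n R 2)) ratio; rewrite -/P; lra.
Qed.

Lemma potential_decay z x0 (beta : R) m t :
  beta <= 1 -> beta * #|B|%:R <= m%:R -> #|C|%:R <= beta * #|B|%:R / 2 ->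
  (m <= #|B :&: nonopt z x0|)%N ->
  \sum_x law copy_strategy z t x0 x * potential x <= (1 - beta / 4) ^+ t * potential x0.
Proof.
move=> beta1 betaB Chalf m_nonopt; apply: law_drift => [|t' x /law_copy_inv]; first lra.
exact: potential_drift betaB Chalf m_nonopt.
Qed.

Lemma copy_done_mass_ge z x0 t (eps : R) :
  eps <= 1 - \sum_x law copy_strategy z t x0 x * potential x ->
  eps <= \sum_(x | copy_done x && true) law copy_strategy z t x0 x.
Proof.
move=> eps_le; rewrite (eq_bigl copy_done) => [|x]; last exact: andbT.
apply: le_trans eps_le _; apply: law_stop_ge; [exact: potential_ge0 | exact: potential_ge1].
Qed.

Lemma copy_done_whp (beta c : R) x0 zout m :
  0 < beta -> 10 <= c * ln n%:R -> (m <= #|B|)%N -> beta * #|B|%:R <= m%:R ->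
  #|C|%:R <= beta * #|B|%:R / 2 ->
  exists t : nat, t%:R <= c * #|C|%:R * ln n%:R / beta /\
    1 - expR (- (1 / 8 * c * ln n%:R)) <=
    prob_stop copy_strategy B m x0 zout t (fun _ _ => true).
Proof.
move=> beta0 s10 mB betaB Chalf; set s := c * ln n%:R in s10 *.
have exp0 := expR_gt0 (- (1 / 8 * c * ln n%:R)).
have [C0|C0] := posnP #|C|.
  exists 0%N; split; first by rewrite C0 mulr0 !mul0r.
  apply: prob_stop_ge mB _ => N _; apply: copy_done_mass_ge; rewrite sum_law0 /potential.
  suff -> : copy_done x0 by rewrite /= subr0; lra.
  by rewrite /copy_done -cards_eq0 -leqn0 -C0 card_pending_le.
set k : R := #|C|%:R.
have k1 : 1 <= k by rewrite ler1n.
have B0 : 0 < (#|B|%:R : R) by nra.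
have beta1 : beta <= 1.
  have mB' : (m%:R : R) <= #|B|%:R by rewrite ler_nat.
  by rewrite -(ler_pM2r B0) mul1r; lra.
set x := k * s / beta.
have x_ge0 : 0 <= x by apply: divr_ge0; [apply: mulr_ge0|]; lra.
exists (Num.truncn x); split.
  have -> : c * k * ln n%:R / beta = x by rewrite /x /s; ring.
  by rewrite truncn_le.
set t := Num.truncn x.
have kst : k * s - beta <= beta * t%:R.
  have xt : x < t%:R + 1 by rewrite natr1; exact: truncnS_gt.
  have -> : k * s = beta * x by rewrite /x; field; lra.
  nra.
apply: prob_stop_ge mB _ => N NB; apply: copy_done_mass_ge.
have m_nonopt : (m <= #|B :&: nonopt (targ B N x0 zout) x0|)%N.
  by move: NB; rewrite inE => /andP[NB /eqP <-]; rewrite nonopt_targ.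
rewrite lerD2l lerN2; apply: le_trans (potential_decay _ beta1 betaB Chalf m_nonopt) _.
apply: le_trans (_ : (1 - beta / 4) ^+ t * 2 ^+ #|C| <= _).
  by rewrite ler_wpM2l ?exprn_ge0 ?potential_le //; lra.
have -> : 1 / 8 * c * ln n%:R = s / 8 by rewrite /s; ring.
by apply: geometric_decay_le => //; apply/andP.
Qed.

Lemma copy_done_spec (beta : R) x0 zout m (N : {set 'I_n}) t x :
  beta * #|B|%:R <= m%:R -> N \in nsub B m -> copy_done x ->
  0 < law copy_strategy (targ B N x0 zout) t x0 x ->
  [/\ goal_ok w C C' x0 x, (forall i, i \notin B -> i \notin C' -> x i = x0 i)
    & beta * #|B|%:R - #|C|%:R <= #|B :&: nonopt (targ B N x0 zout) x|%:R].
Proof.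
move=> betaB; rewrite inE => /andP[NB /eqP cardN] done_x /law_copy_inv inv.
have [same_out _] := inv.
have reached j : j \in C' -> x j = goal_bit x j.
  move=> jC'; apply/eqP; apply: contraTT done_x => xj.
  by apply/set0Pn; exists j; rewrite inE jC' xj.
split=> //.
  move: reached; rewrite /goal_ok /goal_bit; case: w => [v|] reached; first exact: reached.
  move=> i j iC jC' ij; rewrite reached // /copy_src -ij nth_index ?mem_enum //.
  by apply: same_out; [rewrite (disjointFl BC iC) | rewrite (disjointFr CC' iC)].
by have := copy_inv_nonopt inv; rewrite nonopt_targ // cardN -(ler_nat R) natrD; lra.
Qed.

Section Relabel.
Variables (s : {perm 'I_n}) (x0 : bs n).
Hypothesis s_out : forall k, k \notin B -> s k = k.
Local Notation g := (relabel s x0).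

Lemma pending_relabel x : pending (g x) = pending x.
Proof.
apply/setP => k; rewrite !inE; case kC': (k \in C') => //=.
rewrite (relabel_out _ s_out) ?(disjointFl BC' kC') // /goal_bit; case: w => [//|].
by rewrite (relabel_out _ s_out) // (disjointFl BC (copy_src_in kC')).
Qed.

Lemma next_pending_relabel x : next_pending (g x) = next_pending x.
Proof. by rewrite /next_pending pending_relabel. Qed.

Lemma copy_mutant_relabel x i : copy_mutant (g x) i = g (copy_mutant x (s i)).
Proof.
apply/ffunP => k; rewrite !ffunE next_pending_relabel (inj_eq perm_inj).
have -> : (Some (s k) == next_pending x) = (Some k == next_pending x).
  case jx: (next_pending x) => [j|] //; rewrite !(inj_eq Some_inj).
  have jB : j \notin B by rewrite (disjointFl BC' (next_pending_C' jx)).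
  by rewrite -{1}(s_out jB) (inj_eq perm_inj).
by case: (x (s k)); case: (x0 (s k)); case: (x0 k); case: (_ || _).
Qed.

Lemma copy_offs_relabel x y : copy_offs (g x) (g y) = copy_offs x y.
Proof.
rewrite !ffunE (inj_eq (@relabel_inj n s x0)); case: ifP => // _.
rewrite [RHS](reindex_inj (@perm_inj _ s)); apply: eq_big => [i|i _].
  by rewrite (perm_memB s_out).
by rewrite copy_mutant_relabel (inj_eq (@relabel_inj n s x0)).
Qed.

Lemma copy_relabel_invariant : relabel_invariant copy_strategy x0 s.
Proof.
have done_relabel x : copy_done (g x) = copy_done x by rewrite /copy_done pending_relabel.
split=> // z x x'; rewrite /kern /= done_relabel (inj_eq (@relabel_inj n s x0)).
case: ifP => // _; rewrite (reindex_inj (@relabel_inj n s x0)); apply: eq_bigr => y _.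
by rewrite copy_offs_relabel !select_ties !OM_relabel -fun_if (inj_eq (@relabel_inj n s x0)).
Qed.

End Relabel.

End CopyStrategy.

Theorem lemma2 (R : realType) :
  exists kappa : R, 0 < kappa /\ exists c1 : R,
  forall (n : nat) (B C C' : {set 'I_n}),
    [disjoint B & C] -> [disjoint B & C'] -> [disjoint C & C'] -> #|C| = #|C'| ->
  forall w : option (bs n),
  exists S : strategy R n,
  forall (beta c : R) (x0 zout : bs n) (m : nat),
    0 < beta -> 0 < c -> c1 <= c * ln (n%:R) ->
    (m <= #|B|)%N -> beta * #|B|%:R <= m%:R ->
    #|C|%:R <= beta * #|B|%:R / 2 ->
    [/\ (* the copy finishes within c |C| log n / beta iterations w.p. 1 - n^(-kappa c) *)
        exists t : nat, t%:R <= c * #|C|%:R * ln (n%:R) / beta /\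
          1 - expR (- (kappa * c * ln (n%:R))) <= prob_stop S B m x0 zout t (fun _ _ => true),
        (* at the stopping time: C copied into C' (resp. C' overwritten by w), other bits outside B untouched,
           at least b0 - |C| non-optimal bits left in B *)
        forall (N : {set 'I_n}) (t : nat) (x : bs n),
          N \in nsub B m -> stop S x -> 0 < law S (targ B N x0 zout) t x0 x ->
          [/\ goal_ok w C C' x0 x,
              (forall i, i \notin B -> i \notin C' -> x i = x0 i)
            & beta * #|B|%:R - #|C|%:R <= #|B :&: nonopt (targ B N x0 zout) x|%:R]
      & (* the non-optimal positions in B at the stopping time are uniform *)
        forall (t : nat) (S1 S2 : {set 'I_n}),
          S1 \subset B -> S2 \subset B -> #|S1| = #|S2| ->
          prob_stop S B m x0 zout t (fun N x => B :&: nonopt (targ B N x0 zout) x == S1)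
          = prob_stop S B m x0 zout t (fun N x => B :&: nonopt (targ B N x0 zout) x == S2)].
Proof.
exists (1 / 8); split; first lra.
exists 10 => n B C C' BC BC' CC' cardC w; exists (copy_strategy R B C C' w).
move=> beta c x0 zout m beta0 _ s10 mB betaB Chalf; split.
- exact: copy_done_whp.
- by move=> N t x NB done_x /(copy_done_spec BC BC' CC' cardC betaB NB done_x).
- move=> t S1 S2; apply: prob_stop_uniform => s s_out.
  exact: copy_relabel_invariant.
Qed.
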